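(* Under the three-receiver coding module below, at the beginning of any slot $t>0$, at least one of the two receivers not labeled $L$ has an empty unsolved set, i.e., satisfies $H_i=D_i$.
   Context: A sender broadcasts packets $\mathbf{p}_1,\mathbf{p}_2,\dots$ (indexed by arrival order, vectors over $\mathbb{F}_3$) to three receivers $1,2,3$ over a slotted erasure broadcast channel; each slot it transmits at most one linear combination of arrived packets, each receiver either receives it or suffers an erasure, and perfect feedback gives the sender every receiver's knowledge. The rank of a receiver is the dimension of the space of linear combinations it knows. Receiver $i$ has heard of a packet if it knows some linear combination involving that packet (with nonzero coefficient); $H_i$ is the set of packets it has heard of and $D_i$ the set it has decoded; $H_i\setminus D_i$ is its unsolved set. ''Oldest'' means smallest index. Coding module: labels $L,N,D$ form a permutation of $\{1,2,3\}$; initially $L=1,N=2,D=3,m=0$. Each slot: let $U=\{\mathbf{p}_1,\dots,\mathbf{p}_m\}$ together with $\mathbf{p}_{m+1}$ if it has arrived, and set $S_1=D_N\cap D_D$, $S_2=D_N\cap(H_D\setminus D_D)$, $S_3=D_N\setminus H_D$, $S_4=D_D\setminus D_N$, $S_5=(H_D\setminus D_D)\setminus D_N$, $S_6=U\setminus(H_D\cup D_N)$. Transmit: Case 1 ($\mathbf{p}_{m+1}$ not arrived): if $S_2,S_4$ both nonempty send the sum of their oldest packets; else if $S_3,S_4$ both nonempty send the sum of their oldest packets; else send the oldest packet of the first nonempty set among $S_5,S_6,S_2,S_3,S_4$; if all are empty send nothing. Case 2 ($\mathbf{p}_{m+1}\in S_1$): send $\mathbf{p}_{m+1}$ plus whatever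 Case 1 would send. Case 3 ($\mathbf{p}_{m+1}\in S_2$): send $\mathbf{p}_{m+1}+c\mathbf{p}$ with $\mathbf{p}$ the oldest packet of the first nonempty set among $S_4,S_5,S_6$, where $c=1$ unless $\mathbf{p}\in S_5$, in which case $c\in\{1,2\}$ is chosen so that the combination is innovative to receiver $D$. Case 4 ($\mathbf{p}_{m+1}\in S_3$): send $\mathbf{p}_{m+1}+\mathbf{p}$, $\mathbf{p}$ the oldest packet of the first nonempty set among $S_4,S_5,S_6$. Case 5 ($\mathbf{p}_{m+1}\in S_4$): send $\mathbf{p}_{m+1}+\mathbf{p}$, $\mathbf{p}$ the oldest packet of the first nonempty set among $S_2,S_3,S_6$. (In Cases 3–5, if all listed sets are empty, $\mathbf{p}_{m+1}$ is sent alone.) Case 6 (otherwise): send $\mathbf{p}_{m+1}$. After feedback, update $H_i,D_i$, set $m$ to the maximum rank of the three receivers; among receivers that have decoded all of $\mathbf{p}_1,\dots,\mathbf{p}_m$, label the one with lowest index $L$ (if there is none, assign labels arbitrarily); of the other two receivers, if exactly one has nonempty unsolved set, label it $D$ and the other $N$; otherwise assign $D,N$ arbitrarily. *)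

From HB Require Import structures.
From mathcomp Require Import all_boot all_order all_algebra.
Set Implicit Arguments. Unset Strict Implicit. Unset Printing Implicit Defensive.
Import Order.TTheory GRing.Theory Num.Theory.
Local Open Scope ring_scope.

(* Packets are indexed from 0: index k stands for packet p_(k+1).
   A linear combination of packets is its coefficient vector, a finite list
   over 'F_3 (coordinates beyond the list are 0). *)
Definition vec := seq 'F_3.
Definition coord (v : vec) (k : nat) : 'F_3 := nth 0 v k.

(* knowledge of a receiver = list of combinations received so far *)
Definition in_span (S : seq vec) (v : vec) : Prop :=
  exists cs : seq 'F_3,
    forall k, coord v k = \sum_(i < size S) cs`_i * coord (nth [::] S i) k.

Definition width (S : seq vec) : nat := \max_(v <- S) size v.

Definition rank (S : seq vec) : nat :=
  \rank (\matrix_(i < size S, j < width S) coord (nth [::] S i) j).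

Definition unitv (k : nat) : vec := rcons (nseq k 0) 1.

Definition comb (k : nat) (c : 'F_3) (j : nat) : vec :=
  mkseq (fun i => (i == k)%:R + c * (i == j)%:R) (maxn k j).+1.

Definition addv (u v : vec) : vec :=
  mkseq (fun i => coord u i + coord v i) (maxn (size u) (size v)).

Definition decoded (S : seq vec) (k : nat) : Prop := in_span S (unitv k).
Definition heard (S : seq vec) (k : nat) : Prop :=
  exists v, in_span S v /\ coord v k != 0.
Definition unsolved_nonempty (S : seq vec) : Prop :=
  exists k, heard S k /\ ~ decoded S k.

Record state := State {
  know : 'I_3 -> seq vec;   (* receivers 1,2,3 are 0,1,2 *)
  lL : 'I_3; lN : 'I_3; lD : 'I_3;
  mm : nat }.

Definition is_init (s : state) : Prop :=
  (forall i, know s i = [::]) /\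
  lL s = 0 :> nat /\ lN s = 1 :> nat /\ lD s = 2 :> nat /\ mm s = 0%N.

Definition nonempty (P : nat -> Prop) : Prop := exists k, P k.
Definition oldest (P : nat -> Prop) (k : nat) : Prop :=
  P k /\ forall j, (j < k)%N -> ~ P j.

Fixpoint first_oldest (Ps : seq (nat -> Prop)) (k : nat) : Prop :=
  match Ps with
  | [::] => False
  | P :: Ps' => (nonempty P /\ oldest P k) \/ (~ nonempty P /\ first_oldest Ps' k)
  end.
Fixpoint all_empty (Ps : seq (nat -> Prop)) : Prop :=
  match Ps with
  | [::] => True
  | P :: Ps' => ~ nonempty P /\ all_empty Ps'
  end.

Section Module.
Variables (n : nat) (s : state).
(* n = number of packets arrived so far (packets 0..n-1) *)
Let N := lN s.
Let D := lD s.
Let m := mm s.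
Definition Dset (i : 'I_3) (k : nat) : Prop := decoded (know s i) k.
Definition Hset (i : 'I_3) (k : nat) : Prop := heard (know s i) k.
Definition Uset (k : nat) : Prop := (k < m)%N \/ (k = m /\ (m < n)%N).
Definition S1 k := Dset N k /\ Dset D k.
Definition S2 k := Dset N k /\ (Hset D k /\ ~ Dset D k).
Definition S3 k := Dset N k /\ ~ Hset D k.
Definition S4 k := Dset D k /\ ~ Dset N k.
Definition S5 k := (Hset D k /\ ~ Dset D k) /\ ~ Dset N k.
Definition S6 k := Uset k /\ ~ (Hset D k \/ Dset N k).

Definition case1 (x : option vec) : Prop :=
  (nonempty S2 /\ nonempty S4 /\
     exists a b, oldest S2 a /\ oldest S4 b /\ x = Some (comb a 1 b))
  \/ (~ (nonempty S2 /\ nonempty S4) /\ nonempty S3 /\ nonempty S4 /\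
     exists a b, oldest S3 a /\ oldest S4 b /\ x = Some (comb a 1 b))
  \/ (~ (nonempty S2 /\ nonempty S4) /\ ~ (nonempty S3 /\ nonempty S4) /\
     exists k, first_oldest [:: S5; S6; S2; S3; S4] k /\ x = Some (unitv k))
  \/ (all_empty [:: S5; S6; S2; S3; S4] /\ x = None).

Definition innovative (v : vec) : Prop := ~ in_span (know s D) v.

Definition transmit (x : option vec) : Prop :=
  (* Case 1 *)
  (~ (m < n)%N /\ case1 x)
  (* Case 2 *)
  \/ ((m < n)%N /\ S1 m /\ exists y, case1 y /\
        x = Some (if y is Some v then addv (unitv m) v else unitv m))
  (* Case 3 *)
  \/ ((m < n)%N /\ S2 m /\
      ((exists k c, first_oldest [:: S4; S5; S6] k /\ (c = 1%N \/ c = 2%N) /\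
          (~ S5 k -> c = 1%N) /\
          (S5 k -> innovative (comb m c%:R k) \/
                   forall c', (c' = 1%N \/ c' = 2%N) -> ~ innovative (comb m c'%:R k)) /\
          x = Some (comb m c%:R k))
       \/ (all_empty [:: S4; S5; S6] /\ x = Some (unitv m))))
  (* Case 4 *)
  \/ ((m < n)%N /\ S3 m /\
      ((exists k, first_oldest [:: S4; S5; S6] k /\ x = Some (comb m 1 k))
       \/ (all_empty [:: S4; S5; S6] /\ x = Some (unitv m))))
  (* Case 5 *)
  \/ ((m < n)%N /\ S4 m /\
      ((exists k, first_oldest [:: S2; S3; S6] k /\ x = Some (comb m 1 k))
       \/ (all_empty [:: S2; S3; S6] /\ x = Some (unitv m))))
  (* Case 6 *)
  \/ ((m < n)%N /\ ~ S1 m /\ ~ S2 m /\ ~ S3 m /\ ~ S4 m /\ x = Some (unitv m)).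
End Module.

Definition receive (e : bool) (x : option vec) (K : seq vec) : seq vec :=
  if e then (if x is Some v then rcons K v else K) else K.

Definition relabel_ok (K : 'I_3 -> seq vec) (m' : nat) (L N D : 'I_3) : Prop :=
  uniq [:: L; N; D] /\
  (let good i := forall k, (k < m')%N -> decoded (K i) k in
   (exists i, good i) -> good L /\ forall i, good i -> (L <= i)%N) /\
  ~ (unsolved_nonempty (K N) /\ ~ unsolved_nonempty (K D)).

(* one slot: n packets arrived, erasure pattern e (e i = true: receiver i receives) *)
Definition step (n : nat) (e : 'I_3 -> bool) (s s' : state) : Prop :=
  exists x, transmit n s x /\
    (forall i, know s' i = receive (e i) x (know s i)) /\
    mm s' = (\max_(i < 3) rank (know s' i))%N /\
    relabel_ok (know s') (mm s') (lL s') (lN s') (lD s').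

(* Receiver N is in fact always solved.  This follows from an invariant kept
   at the start of every slot: all knowledge involves only p_1..p_(m+1), L has
   decoded p_1..p_m, N is solved, and at most one packet is heard but not
   decoded by D while not decoded by N (the set S5).  Every transmission of
   the module involves only packets up to p_(m+1) and at most one packet that
   N has not decoded, except in Case 5 with a packet from S6; there D knows
   p_(m+1) and is solved, because |S5| <= 1, S2 is empty and an unsolved set
   is never a singleton.  Hence after the slot the old L (still decoding
   everything but p_(m+1)) and one of the old N, D are solved, and the
   relabelling rule never names the remaining receiver N.  A reception adds to
   S5 at most one packet, which then must be the unique old one, if any. *)

From mathcomp Require Import all_boot all_order all_algebra.
From Stdlib Require Import Classical.
Set Implicit Arguments. Unset Strict Implicit. Unset Printing Implicit Defensive.
Import GRing.Theory.
Local Open Scope ring_scope.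

(* Spans are handled through coordinate functions [nat -> 'F_3] rather than
   vectors, so that intermediate combinations need no explicit length. *)
Definition spans (S : seq vec) (f : nat -> 'F_3) : Prop :=
  exists c : nat -> 'F_3, forall k, f k = \sum_(i < size S) c i * coord (nth [::] S i) k.

Lemma in_span_spans S v : in_span S v <-> spans S (coord v).
Proof.
split; first by case=> cs H; exists (fun i => cs`_i).
case=> c H; exists (mkseq c (size S)) => k; rewrite H.
by apply: eq_bigr => i _; rewrite nth_mkseq.
Qed.

Lemma eq_spans S f g : f =1 g -> spans S f -> spans S g.
Proof. by move=> E [c H]; exists c => k; rewrite -E. Qed.

Lemma spansD S f g : spans S f -> spans S g -> spans S (fun k => f k + g k).
Proof.
case=> c Hc [d Hd]; exists (fun i => c i + d i) => k.
by rewrite Hc Hd -big_split /=; apply: eq_bigr => i _; rewrite mulrDl.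
Qed.

Lemma spansZ S a f : spans S f -> spans S (fun k => a * f k).
Proof.
case=> c Hc; exists (fun i => a * c i) => k.
by rewrite Hc mulr_sumr; apply: eq_bigr => i _; rewrite mulrA.
Qed.

Lemma spansB S f g : spans S f -> spans S g -> spans S (fun k => f k - g k).
Proof.
move=> Hf /(spansZ (-1)) Hg; apply: eq_spans (spansD Hf Hg) => k.
by rewrite mulN1r.
Qed.

Lemma spans_rcons S x f : spans S f -> spans (rcons S x) f.
Proof.
case=> c Hc; exists (fun i => if (i < size S)%N then c i else 0) => k.
rewrite size_rcons big_ord_recr /= ltnn mul0r addr0 Hc.
by apply: eq_bigr => i _; rewrite ltn_ord nth_rcons ltn_ord.
Qed.

Lemma spans_last S x : spans (rcons S x) (coord x).
Proof.
exists (fun i => (i == size S)%:R) => k.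
rewrite size_rcons big_ord_recr /= eqxx mul1r nth_rcons ltnn eqxx big1 ?add0r //.
by move=> i _; rewrite (ltn_eqF (ltn_ord i)) mul0r.
Qed.

Lemma spans_rconsP S x f : spans (rcons S x) f ->
  exists a g, spans S g /\ forall k, f k = g k + a * coord x k.
Proof.
case=> c Hc; exists (c (size S)).
exists (fun k => \sum_(i < size S) c i * coord (nth [::] S i) k); split; first by exists c.
move=> k; rewrite Hc size_rcons big_ord_recr /= nth_rcons ltnn eqxx.
by congr (_ + _); apply: eq_bigr => i _; rewrite nth_rcons ltn_ord.
Qed.

Lemma spans_nil f k : spans [::] f -> f k = 0.
Proof. by case=> c ->; rewrite big_ord0. Qed.

Definition delta (k : nat) : nat -> 'F_3 := fun i => (i == k)%:R.

Lemma coord_default v i : (size v <= i)%N -> coord v i = 0.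
Proof. by move=> H; rewrite /coord nth_default. Qed.

Lemma coord_unitv k i : coord (unitv k) i = delta k i.
Proof.
rewrite /coord /unitv /delta nth_rcons size_nseq.
by case: ltngtP => H; rewrite ?nth_nseq ?H.
Qed.

Lemma coord_comb a c b i : coord (comb a c b) i = delta a i + c * delta b i.
Proof.
rewrite /coord /comb /delta; case: (ltnP i (maxn a b).+1) => H; first by rewrite nth_mkseq.
rewrite nth_default ?size_mkseq //.
have Ha : (i == a) = false by apply/negbTE; rewrite neq_ltn (leq_ltn_trans (leq_maxl a b)) ?orbT.
have Hb : (i == b) = false by apply/negbTE; rewrite neq_ltn (leq_ltn_trans (leq_maxr a b)) ?orbT.
by rewrite Ha Hb mulr0 addr0.
Qed.

Lemma coord_addv u v i : coord (addv u v) i = coord u i + coord v i.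
Proof.
rewrite /coord /addv; case: (ltnP i (maxn (size u) (size v))) => H; first by rewrite nth_mkseq.
rewrite nth_default ?size_mkseq // !nth_default ?addr0 //.
  exact: leq_trans (leq_maxr _ _) H.
exact: leq_trans (leq_maxl _ _) H.
Qed.

Lemma coord_unitv_neq0 u i : coord (unitv u) i != 0 -> i = u.
Proof. by rewrite coord_unitv /delta; case: (eqVneq i u) => // _; rewrite eqxx. Qed.

Lemma coord_comb_neq0 a c b i : coord (comb a c b) i != 0 -> i = a \/ i = b.
Proof.
rewrite coord_comb /delta; case: (eqVneq i a) => [->|_]; first by left.
by case: (eqVneq i b) => [->|_]; [right | rewrite mulr0 addr0 eqxx].
Qed.

Lemma coord_addv_neq0 u v i : coord (addv u v) i != 0 -> coord u i != 0 \/ coord v i != 0.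
Proof.
by rewrite coord_addv; case: (eqVneq (coord u i) 0) => [->|]; [rewrite add0r; right | left].
Qed.

Lemma decodedE S k : decoded S k <-> spans S (delta k).
Proof.
rewrite /decoded in_span_spans.
by split; apply: eq_spans => i; rewrite coord_unitv.
Qed.

Lemma heardP S k : heard S k <-> exists v : vec, spans S (coord v) /\ coord v k != 0.
Proof. by split=> -[v [H1 H2]]; exists v; split=> //; apply/in_span_spans. Qed.

Lemma decoded_heard S k : decoded S k -> heard S k.
Proof.
move=> H; apply/heardP; exists (unitv k); split; first by apply/in_span_spans.
by rewrite coord_unitv /delta eqxx oner_eq0.
Qed.

Lemma decoded_rcons S x k : decoded S k -> decoded (rcons S x) k.
Proof. by move=> /decodedE H; apply/decodedE; apply: spans_rcons. Qed.

Lemma decoded_rcons_unitv S u : decoded (rcons S (unitv u)) u.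
Proof. by apply/decodedE; apply: eq_spans (spans_last S (unitv u)) => i; rewrite coord_unitv. Qed.

Lemma decoded_rcons_pair S v a k : decoded S a -> coord v =1 (fun i => delta a i + delta k i) ->
  decoded (rcons S v) k.
Proof.
move=> /decodedE Ha Hv; apply/decodedE.
by apply: eq_spans (spansB (spans_last S v) (spans_rcons v Ha)) => i; rewrite Hv addrC addKr.
Qed.

(* The part of the witness spanned by [S] is realized by a vector as long as
   the longest vector of [S]. *)
Lemma heard_rcons S x k : heard (rcons S x) k -> heard S k \/ coord x k != 0.
Proof.
case/heardP=> v [/spans_rconsP [a [g [[c Hc] E]]] Hv].
have [Hx|] := eqVneq (coord x k) 0; last by right.
left; move: Hv; rewrite E Hx mulr0 addr0 => Hgk.
pose W := \max_(i < size S) size (nth [::] S i).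
have Hw i : coord (mkseq g W) i = g i.
  rewrite /coord; case: (ltnP i W) => Hi; first by rewrite nth_mkseq.
  rewrite nth_default ?size_mkseq // Hc big1 // => j _.
  by rewrite coord_default ?mulr0 // (leq_trans (leq_bigmax j) Hi).
apply/heardP; exists (mkseq g W); rewrite Hw; split=> //.
by apply: eq_spans (fun i => esym (Hw i)) _; exists c.
Qed.

(* Gaussian elimination of the coordinates of [v] other than [j]. *)
Lemma decoded_pivot S (v : vec) j : spans S (coord v) -> coord v j != 0 ->
  (forall k, k != j -> coord v k != 0 -> decoded S k) -> decoded S j.
Proof.
move=> Hv Hj Hk.
have Hcut B : spans S (fun k => if (k < B)%N && (k != j) then 0 else coord v k).
  elim: B => [|B IH]; first exact: eq_spans Hv.
  have [EB|HB] := eqVneq B j.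
    apply: eq_spans IH => k; rewrite EB; have [->|Hkj] := eqVneq k j; rewrite ?andbF //.
    by rewrite /= ltnS (leq_eqVlt k j) (negbTE Hkj).
  have [HvB|HvB] := eqVneq (coord v B) 0.
    apply: eq_spans IH => k; rewrite ltnS (leq_eqVlt k B).
    by have [->|_] := eqVneq k B; rewrite //= ltnn /= HvB; case: (_ != _).
  have /decodedE HdB := Hk B HB HvB.
  apply: eq_spans (spansB IH (spansZ (coord v B) HdB)) => k.
  rewrite /delta ltnS (leq_eqVlt k B); have [->|_] := eqVneq k B.
    by rewrite /= ltnn HB /= mulr1 subrr.
  by rewrite mulr0 subr0.
apply/decodedE; apply: eq_spans (spansZ (coord v j)^-1 (Hcut (size v))) => k.
rewrite /delta; have [->|_] := eqVneq k j; first by rewrite andbF mulVf.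
by rewrite andbT; case: ltnP => Hks; rewrite ?(coord_default Hks) mulr0.
Qed.

Definition solved S := forall k, heard S k -> decoded S k.

Lemma solvedE S : ~ unsolved_nonempty S <-> solved S.
Proof.
split=> [H k Hk | H [k [Hk []]]]; last exact: H.
by apply: NNPP => Hd; apply: H; exists k.
Qed.

Definition decoded_but S j (v : vec) :=
  forall i, i != j -> coord v i != 0 -> decoded S i.

Lemma solved_rcons S x j : solved S -> decoded_but S j x -> solved (rcons S x).
Proof.
move=> HS Hx i /heard_rcons [/HS Hi|Hi]; first exact: decoded_rcons.
have [Eij|Hij] := eqVneq i j; last exact/decoded_rcons/Hx.
rewrite Eij in Hi *; apply: (decoded_pivot (spans_last S x) Hi) => k Hk Hxk.
exact/decoded_rcons/Hx.
Qed.

Lemma unsolved_other S j : heard S j -> ~ decoded S j ->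
  exists2 j', j' != j & heard S j' /\ ~ decoded S j'.
Proof.
move=> /heardP [v [Hv Hvj]] Hd; apply: NNPP => Hn; apply: Hd.
apply: (decoded_pivot Hv Hvj) => k Hkj Hvk; apply: NNPP => Hdk; apply: Hn.
by exists k => //; split=> //; apply/heardP; exists v.
Qed.

Definition supported (S : seq vec) (M : nat) :=
  forall i k, (i < size S)%N -> (M < k)%N -> coord (nth [::] S i) k = 0.

Lemma heard_supported S M k : supported S M -> heard S k -> (k <= M)%N.
Proof.
move=> HS /heardP [v [[c Hc] Hvk]]; rewrite leqNgt; apply/negP => Hk.
by move: Hvk; rewrite Hc big1 ?eqxx // => i _; rewrite HS // mulr0.
Qed.

Lemma decoded_supported S M k : supported S M -> decoded S k -> (k <= M)%N.
Proof. by move=> HS /decoded_heard; apply: heard_supported. Qed.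

Lemma supported_rcons S x M : supported S M -> (forall k, (M < k)%N -> coord x k = 0) ->
  supported (rcons S x) M.
Proof.
move=> HS Hx i k; rewrite size_rcons ltnS nth_rcons leq_eqVlt => /orP [/eqP ->|Hi] Hk.
  by rewrite ltnn eqxx; apply: Hx.
by rewrite Hi; apply: HS.
Qed.

Lemma supportedW S M M' : (M <= M')%N -> supported S M -> supported S M'.
Proof. by move=> HM HS i k Hi Hk; apply: HS => //; apply: leq_ltn_trans Hk. Qed.

(* Only packet [M] can be heard but not decoded; it serves as the pivot. *)
Lemma solved_supported S M : supported S M -> (forall k, (k < M)%N -> decoded S k) -> solved S.
Proof.
move=> HS HM k Hk; move: (heard_supported HS Hk).
rewrite leq_eqVlt => /orP [/eqP Ek|]; last exact: HM.
case/heardP: (Hk) => v [Hv Hvk]; apply: (decoded_pivot Hv Hvk) => k' Hk' Hvk'.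
have : (k' <= M)%N by apply: heard_supported HS _; apply/heardP; exists v.
by rewrite leq_eqVlt -Ek (negbTE Hk') /= Ek; apply: HM.
Qed.

Definition coef_mx (S : seq vec) W : 'M['F_3]_(size S, W) :=
  \matrix_(i < size S, j < W) coord (nth [::] S i) j.
Definition trunc_mx W M : 'M['F_3]_(M.+1, W) := \matrix_(j < M.+1, l < W) (j == l :> nat)%:R.

Lemma coef_mx_trunc S M : supported S M ->
  coef_mx S (width S) = coef_mx S M.+1 *m trunc_mx (width S) M.
Proof.
move=> HS; apply/matrixP => i l; rewrite !mxE.
have Hj (j : 'I_M.+1) : j != l :> nat -> coef_mx S M.+1 i j * trunc_mx (width S) M j l = 0.
  by move=> /negbTE Hjl; rewrite !mxE Hjl mulr0.
case: (ltnP l M.+1) => Hl; last first.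
  by rewrite HS // big1 // => j _; apply: Hj; rewrite neq_ltn (leq_trans (ltn_ord j) Hl).
by rewrite (bigD1 (Ordinal Hl)) //= !mxE eqxx mulr1 big1 ?addr0.
Qed.

Lemma rank_supported S M : supported S M -> (rank S <= M.+1)%N.
Proof.
move=> HS; rewrite /rank -/(coef_mx S (width S)) (coef_mx_trunc HS).
exact: leq_trans (mxrankM_maxr _ _) (rank_leq_row _).
Qed.

(* Full rank makes the truncated coefficient matrix row full, so it has a right inverse. *)
Lemma decoded_rank_full S M : supported S M -> (M.+1 <= rank S)%N ->
  forall k, (k <= M)%N -> decoded S k.
Proof.
move=> HS; rewrite /rank -/(coef_mx S (width S)) (coef_mx_trunc HS) => Hr k Hk.
have /row_fullP [X HX] : row_full (coef_mx S M.+1).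
  by rewrite /row_full eqn_leq rank_leq_col (leq_trans Hr (mxrankM_maxl _ _)).
pose k0 : 'I_M.+1 := Ordinal (Hk : (k < M.+1)%N).
apply/decodedE; exists (fun i => oapp (X k0) 0 (insub i)) => l.
rewrite /delta; under eq_bigr => i _ do rewrite valK /=.
case: (ltnP l M.+1) => Hl; last first.
  by rewrite gtn_eqF ?(leq_ltn_trans Hk Hl) // big1 // => i _; rewrite HS ?mulr0.
move/matrixP: HX => /(_ k0 (Ordinal Hl)); rewrite !mxE eq_sym => <-.
by apply: eq_bigr => i _; rewrite mxE.
Qed.

Lemma rank_decoded S M : (forall k, (k < M)%N -> decoded S k) -> (M <= rank S)%N.
Proof.
case: M => [//|M] HM.
have HW : (M < width S)%N.
  rewrite ltnNge; apply/negP => HW; have /decodedE [c Hc] := HM M (ltnSn M).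
  move: (Hc M); rewrite /delta eqxx big1 => [/eqP|i _]; first by rewrite oner_eq0.
  rewrite coord_default ?mulr0 // (leq_trans _ HW) //.
  by apply: (@leq_bigmax_seq _ _ xpredT size) => //; apply: mem_nth.
have HE : (trunc_mx (width S) M <= coef_mx S (width S))%MS.
  apply/row_subP => k; apply/submxP; have /decodedE [c Hc] := HM k (ltn_ord k).
  exists (\row_(i < size S) c i); apply/rowP => l; rewrite !mxE eq_sym.
  by rewrite /delta in Hc; rewrite Hc; apply: eq_bigr => i _; rewrite !mxE.
rewrite /rank -/(coef_mx S (width S)); apply: leq_trans (mxrankS HE).
rewrite -[X in (X <= _)%N](mxrank1 'F_3 M.+1).
suff <- : trunc_mx (width S) M *m (trunc_mx (width S) M)^T = 1%:M by apply: mxrankM_maxl.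
apply/matrixP => i j; rewrite !mxE.
rewrite (bigD1 (Ordinal (leq_trans (ltn_ord i) HW))) //= !mxE eqxx mul1r eq_sym big1 ?addr0 //.
move=> l Hl; rewrite !mxE (_ : (nat_of_ord i == l) = false) ?mul0r //.
by apply/negbTE; apply: contra Hl => /eqP E; apply/eqP/val_inj.
Qed.

Lemma receive_ind (Q : seq vec -> Prop) b x K :
  Q K -> (forall v, x = Some v -> Q (rcons K v)) -> Q (receive b x K).
Proof. by rewrite /receive; case: b; case: x => //= v _; apply. Qed.

Lemma decoded_receive b x K k : decoded K k -> decoded (receive b x K) k.
Proof.
by move=> H; apply: (@receive_ind (fun K' => decoded K' k)) => // v _; apply: decoded_rcons.
Qed.

Lemma solved_receive b x K j : solved K -> oapp (decoded_but K j) True x ->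
  solved (receive b x K).
Proof.
move=> HK Hx; apply: (@receive_ind solved) => // v Ev.
by rewrite Ev in Hx; apply: solved_rcons Hx.
Qed.

Lemma unsolved_receive b x K c : solved K ->
  heard (receive b x K) c -> ~ decoded (receive b x K) c ->
  exists2 v, x = Some v & coord v c != 0.
Proof.
move=> HK; apply: (@receive_ind (fun K' => heard K' c -> ~ decoded K' c -> _)).
  by move=> /HK.
move=> v Ev /heard_rcons [/HK Hc []|Hv _].
  exact: decoded_rcons.
by exists v.
Qed.

Lemma uniq_ord3 (a b c : 'I_3) : uniq [:: a; b; c] ->
  [/\ a != b, a != c, b != c & forall i, [\/ i = a, i = b | i = c]].
Proof.
move=> Huniq; move: (Huniq); rewrite /= !inE negb_or => /and3P [/andP [Hab Hac] Hbc _].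
split=> // i; have : i \in [:: a; b; c].
  apply: contraT => Hi; have /card_uniqP Hcard : uniq (i :: [:: a; b; c]) by rewrite /= Hi.
  by have := max_card (mem (i :: [:: a; b; c])); rewrite Hcard card_ord.
by rewrite !inE => /or3P [] /eqP ->; [exact: Or31 | exact: Or32 | exact: Or33].
Qed.

Record invariant (s : state) : Prop := {
  inv_labels : uniq [:: lL s; lN s; lD s];
  inv_supported : forall i, supported (know s i) (mm s);
  inv_leader : forall k, (k < mm s)%N -> decoded (know s (lL s)) k;
  inv_solved_N : solved (know s (lN s));
  inv_S5_unique : forall a b, S5 s a -> S5 s b -> a = b }.

Lemma invariant_init s : is_init s -> invariant s.
Proof.
have heard_nil k : ~ heard [::] k by case/heardP => v [/spans_nil -> ]; rewrite eqxx.
case=> Hk [HL [HN [HD Hm]]]; split.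
- by rewrite /= !inE -!val_eqE /= HL HN HD.
- by move=> i; rewrite Hk.
- by move=> k; rewrite Hm.
- by rewrite Hk => k /heard_nil.
- by move=> a b [[]]; rewrite /Hset Hk => /heard_nil.
Qed.

(* With [S2] empty, every unsolved packet of [D] lies in [S5], and an unsolved
   set is never a singleton. *)
Lemma invariant_solved_D s : invariant s -> ~ nonempty (S2 s) -> solved (know s (lD s)).
Proof.
case=> _ _ _ _ HS5 HS2 k Hk; apply: NNPP => Hd.
have [j' Hj' [Hh' Hd']] := unsolved_other Hk Hd.
apply: HS2; have [HNk|HNk] := classic (decoded (know s (lN s)) k); first by exists k.
have [HNj|HNj] := classic (decoded (know s (lN s)) j'); first by exists j'.
by move: Hj'; rewrite (HS5 k j' (conj (conj Hk Hd) HNk) (conj (conj Hh' Hd') HNj)) eqxx.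
Qed.

Definition tx_supported s (x : option vec) :=
  oapp (fun v => forall k, (mm s < k)%N -> coord v k = 0) True x.

Definition tx_N_safe s (x : option vec) :=
  exists j, oapp (decoded_but (know s (lN s)) j) True x.

(* Case 5 with a packet of [S6]: [N] may fail to decode it, but [D] is solved
   and does. *)
Definition tx_D_case s (x : option vec) :=
  exists2 k, x = Some (comb (mm s) 1 k) &
    decoded (know s (lD s)) (mm s) /\ ~ nonempty (S2 s).

Definition tx_S5_safe s (x : option vec) :=
  oapp (fun v => exists2 k0, S5 s k0 \/ ~ nonempty (S5 s) &
    forall i, i != k0 -> coord v i != 0 ->
      decoded (know s (lN s)) i \/ decoded (rcons (know s (lD s)) v) i) True x.

Definition tx_good s (x : option vec) :=
  [/\ tx_supported s x, tx_N_safe s x \/ tx_D_case s x & tx_S5_safe s x].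

Section Step.

Variables (s s' : state) (e : 'I_3 -> bool) (x : option vec).
Hypotheses (Hinv : invariant s) (Hx : tx_good s x).
Hypothesis Hknow : forall i, know s' i = receive (e i) x (know s i).
Hypothesis Hmm : mm s' = (\max_(i < 3) rank (know s' i))%N.
Hypothesis Hrel : relabel_ok (know s') (mm s') (lL s') (lN s') (lD s').

Let m := mm s.

Lemma step_supported i : supported (know s' i) m.
Proof.
case: Hx => Hsupp _ _; rewrite Hknow.
apply: (@receive_ind (fun K => supported K m)) => [|v Ev]; first exact: inv_supported.
by rewrite Ev in Hsupp; apply: supported_rcons Hsupp; apply: inv_supported.
Qed.

Lemma step_decoded_old_leader k : (k < m)%N -> decoded (know s' (lL s)) k.
Proof. by move=> Hk; rewrite Hknow; apply/decoded_receive/(inv_leader Hinv). Qed.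

Lemma step_solved_old_leader : solved (know s' (lL s)).
Proof. exact: solved_supported (@step_supported _) step_decoded_old_leader. Qed.

Lemma step_mm_ge : (m <= mm s')%N.
Proof. by rewrite Hmm (leq_trans (rank_decoded step_decoded_old_leader)) ?(leq_bigmax (lL s)). Qed.

(* If [m] grows, it grows by one, and a receiver of maximal rank decodes all of [0..m]. *)
Lemma step_decoded_leader k : (k < mm s')%N -> decoded (know s' (lL s')) k.
Proof.
case: Hrel => _ [Hgood _]; apply: (proj1 (Hgood _)).
have [Hm'|Hm'] := leqP (mm s') m.
  by exists (lL s) => k' Hk'; apply: step_decoded_old_leader (leq_trans Hk' Hm').
have [i Hi] : {i | \max_(i < 3) rank (know s' i) = rank (know s' i)}.
  by apply: eq_bigmax; rewrite card_ord.
have Hrank := rank_supported (@step_supported i).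
exists i => k' Hk'; apply: (decoded_rank_full (@step_supported i)).
  by rewrite -Hi -Hmm.
by rewrite -ltnS (leq_trans Hk') // Hmm Hi.
Qed.

Lemma step_solved_N_or_D : solved (know s' (lN s)) \/ solved (know s' (lD s)).
Proof.
case: Hx => _ [[j Hj]|[k Ex [HDm HS2]]] _.
  by left; rewrite Hknow; apply: solved_receive (inv_solved_N Hinv) Hj.
right; rewrite Hknow; apply: (solved_receive (j := k) (invariant_solved_D Hinv HS2)).
by rewrite Ex => i Hi /coord_comb_neq0 [->|Eik] //; move: Hi; rewrite Eik eqxx.
Qed.

Lemma step_unsolved i : ~ solved (know s' i) -> i = lN s \/ i = lD s.
Proof.
have [_ _ _ /(_ i) [] ->] := uniq_ord3 (inv_labels Hinv); [|by left|by right].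
by move/(_ step_solved_old_leader).
Qed.

(* At most one receiver is unsolved, and relabelling never calls it [N]. *)
Lemma step_solved_N : solved (know s' (lN s')).
Proof.
case: Hrel => Hu [_ HND]; have [_ _ HneND _] := uniq_ord3 Hu.
apply: NNPP => HN; have HD : ~ solved (know s' (lD s')).
  by move=> /solvedE HD; apply: HND; split=> //; apply: NNPP => /solvedE.
case: (step_unsolved HN) => EN; case: (step_unsolved HD) => ED;
  move: HN HD HneND; rewrite EN ED ?eqxx // => HN HD _; by case: step_solved_N_or_D.
Qed.

Lemma step_S5_old_leader : lN s' = lL s -> forall c, S5 s' c -> c = m.
Proof.
move=> EN c [[Hc _] Hdc]; have Hcm := heard_supported (@step_supported _) Hc.
apply/eqP; rewrite eqn_leq Hcm /= leqNgt; apply: contra_notN Hdc.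
by rewrite /Dset EN; apply: step_decoded_old_leader.
Qed.

Lemma step_S5_swap : lN s' = lD s -> lD s' = lN s -> forall a b, S5 s' a -> S5 s' b -> a = b.
Proof.
move=> EN ED; suff [k Hk] : exists k, forall c, S5 s' c -> c = k.
  by move=> a b /Hk -> /Hk ->.
case: Hx => _ [[j Hj] _|[k Ex [HDm _]] _].
  exists 0%N => c [[Hc Hdc] _]; exfalso; apply: Hdc; move: c Hc.
  by rewrite /Hset /Dset ED Hknow; apply: solved_receive (inv_solved_N Hinv) Hj.
exists k => c [[Hc Hdc] HNc]; move: Hc Hdc; rewrite /Hset /Dset ED Hknow.
move=> /unsolved_receive Hcx /(Hcx (inv_solved_N Hinv)) [v]; rewrite Ex => -[<-].
case/coord_comb_neq0 => [Ecm|//]; case: HNc.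
by rewrite /Dset EN Hknow Ecm; apply: decoded_receive.
Qed.

Lemma step_S5_keep : lN s' = lN s -> lD s' = lD s -> forall a b, S5 s' a -> S5 s' b -> a = b.
Proof.
move=> EN ED a b; rewrite /S5 /Hset /Dset EN ED !Hknow.
have HdN c : ~ decoded (receive (e (lN s)) x (know s (lN s))) c -> ~ decoded (know s (lN s)) c.
  by move=> H1 H2; apply: H1; apply: decoded_receive.
move=> [Ha /HdN HNa] [Hb /HdN HNb]; move: Ha Hb; case: Hx => _ _.
apply: (@receive_ind (fun K => tx_S5_safe s x -> (heard K a /\ ~ decoded K a) ->
  (heard K b /\ ~ decoded K b) -> a = b)).
  by move=> _ Ha Hb; apply: (inv_S5_unique Hinv (conj Ha HNa) (conj Hb HNb)).
move=> v Ev; rewrite /tx_S5_safe Ev => -[k0 Hk0 Hv].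
have Hc c : ~ decoded (know s (lN s)) c -> heard (rcons (know s (lD s)) v) c /\
    ~ decoded (rcons (know s (lD s)) v) c -> S5 s c \/ c = k0.
  move=> HNc [/heard_rcons [Hc|Hvc] Hdc].
    by left; split=> //; split=> // /(decoded_rcons v).
  have [->|Hck] := eqVneq c k0; first by right.
  by case: (Hv c Hck Hvc).
move=> /(Hc a HNa) [Sa|->] /(Hc b HNb) [Sb|->] //; first exact: (inv_S5_unique Hinv).
- by case: Hk0 => [Sk|[]]; [exact: (inv_S5_unique Hinv) | exists a].
- by case: Hk0 => [Sk|[]]; [exact: (inv_S5_unique Hinv) | exists b].
Qed.

Lemma step_S5_unique a b : S5 s' a -> S5 s' b -> a = b.
Proof.
have [_ _ HneND _] := uniq_ord3 (proj1 Hrel).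
have [_ _ _ Hlabel] := uniq_ord3 (inv_labels Hinv).
have HD_leader : lD s' = lL s -> S5 s' a -> a = b.
  move=> ED [[Ha Hda] _]; case: Hda.
  by rewrite /Dset ED; apply: step_solved_old_leader; rewrite -ED.
case: (Hlabel (lN s')) => EN.
- by move=> /(step_S5_old_leader EN) -> /(step_S5_old_leader EN) ->.
- case: (Hlabel (lD s')) => ED; [by move=> /(HD_leader ED) | by move: HneND; rewrite EN ED eqxx |].
  exact: step_S5_keep.
- case: (Hlabel (lD s')) => ED; [by move=> /(HD_leader ED) | exact: step_S5_swap |].
  by move: HneND; rewrite EN ED eqxx.
Qed.

Lemma step_invariant : invariant s'.
Proof.
split.
- exact: (proj1 Hrel).
- by move=> i; apply: supportedW step_mm_ge (@step_supported i).
- exact: step_decoded_leader.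
- exact: step_solved_N.
- exact: step_S5_unique.
Qed.

End Step.

Lemma first_oldest3 (P1 P2 P3 : nat -> Prop) k : first_oldest [:: P1; P2; P3] k ->
  [\/ P1 k, ~ nonempty P1 /\ P2 k | [/\ ~ nonempty P1, ~ nonempty P2 & P3 k]].
Proof.
by case=> [[_ [? _]]|[? [[_ [? _]]|[? [[_ [? _]]|[_ []]]]]]];
  [apply: Or31 | apply: Or32 | apply: Or33].
Qed.

Lemma first_oldest_mem (Ps : seq (nat -> Prop)) k : first_oldest Ps k ->
  foldr (fun P acc => P k \/ acc) False Ps.
Proof. by elim: Ps => [//|P Ps IH] /= [[_ [H _]]|[_ /IH]]; [left | right]. Qed.

Section Transmit.

Variables (n : nat) (s : state).
Hypothesis Hinv : invariant s.

Let m := mm s.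
Let KN := know s (lN s).
Let KD := know s (lD s).

Lemma heard_D_le k : heard KD k -> (k <= m)%N.
Proof. exact: heard_supported (inv_supported Hinv (i := lD s)). Qed.

Lemma decoded_D_le k : decoded KD k -> (k <= m)%N.
Proof. by move/decoded_heard; apply: heard_D_le. Qed.

Lemma decoded_N_le k : decoded KN k -> (k <= m)%N.
Proof. exact: decoded_supported (inv_supported Hinv (i := lN s)). Qed.

Lemma S6_le k : S6 n s k -> (k <= m)%N.
Proof. by case=> [[/ltnW|[-> _]]]. Qed.

Lemma tx_S5_safe_decoded v :
  (forall i, coord v i != 0 -> decoded KN i \/ decoded (rcons KD v) i) -> tx_S5_safe s (Some v).
Proof.
move=> Hv; have [[k Hk]|HS5] := classic (nonempty (S5 s)).
  by exists k; [left | move=> i _; apply: Hv].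
by exists 0%N; [right | move=> i _; apply: Hv].
Qed.

Lemma tx_good_None : tx_good s None.
Proof. by split=> //; left; exists 0%N. Qed.

Lemma tx_good_unitv u : (u <= m)%N -> tx_good s (Some (unitv u)).
Proof.
move=> Hu; split.
- move=> k Hk; apply/eqP; apply: contraT => /coord_unitv_neq0 Ek.
  by move: Hk; rewrite Ek ltnNge Hu.
- by left; exists u => i Hi /coord_unitv_neq0 Ei; move: Hi; rewrite Ei eqxx.
- by apply: tx_S5_safe_decoded => i /coord_unitv_neq0 ->; right; apply: decoded_rcons_unitv.
Qed.

Lemma tx_supported_comb a c b : (a <= m)%N -> (b <= m)%N -> tx_supported s (Some (comb a c b)).
Proof.
move=> Ha Hb k Hk; apply/eqP; apply: contraT => /coord_comb_neq0 [] Ek;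
  by move: Hk; rewrite Ek ltnNge ?Ha ?Hb.
Qed.

Lemma tx_N_safe_comb a c b : decoded KN a -> tx_N_safe s (Some (comb a c b)).
Proof.
by move=> Ha; exists b => i Hi /coord_comb_neq0 [->//|Eib]; move: Hi; rewrite Eib eqxx.
Qed.

Lemma tx_good_comb a b : decoded KN a -> decoded KD b -> tx_good s (Some (comb a 1 b)).
Proof.
move=> Ha Hb; split; [|by left; apply: tx_N_safe_comb|].
  by apply: tx_supported_comb; [apply: decoded_N_le | apply: decoded_D_le].
apply: tx_S5_safe_decoded => i /coord_comb_neq0 [->|->]; first by left.
by right; apply: decoded_rcons.
Qed.

Lemma case1_shape y : case1 n s y -> [\/ y = None,
  exists a b, [/\ y = Some (comb a 1 b), decoded KN a & decoded KD b] |
  exists2 k, y = Some (unitv k) & (k <= m)%N].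
Proof.
case=> [[_ [_ [a [b [[[Ha _] _] [[[Hb _] _] ->]]]]]]|
       [[_ [_ [_ [a [b [[[Ha _] _] [[[Hb _] _] ->]]]]]]]|
       [[_ [_ [k [/first_oldest_mem Hk ->]]]]|[_ ->]]]];
  [apply: Or32; exists a, b | apply: Or32; exists a, b | apply: Or33; exists k | exact: Or31] => //.
by case: Hk => [[[/heard_D_le //]]|[/S6_le //|[[/decoded_N_le //]|
  [[/decoded_N_le //]|[[/decoded_D_le //]|[]]]]]].
Qed.

Lemma tx_good_case1 y : case1 n s y -> tx_good s y.
Proof.
case/case1_shape => [->|[a [b [-> Ha Hb]]]|[k -> Hk]];
  [exact: tx_good_None | exact: tx_good_comb | exact: tx_good_unitv].
Qed.

(* Case 2: packet [m] is decoded by both [N] and [D], so adding it to a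
   Case 1 combination costs them nothing. *)
Lemma tx_good_case2_comb a b : decoded KN m -> decoded KN a -> decoded KD b ->
  tx_good s (Some (addv (unitv m) (comb a 1 b))).
Proof.
move=> HNm Ha Hb; split.
- move=> i Hi; apply/eqP; apply: contraT.
  case/coord_addv_neq0 => [/coord_unitv_neq0|/coord_comb_neq0 [|]] Ei; move: Hi; rewrite Ei.
  + by rewrite ltnn.
  + by rewrite ltnNge (decoded_N_le Ha).
  + by rewrite ltnNge (decoded_D_le Hb).
- left; exists b => i Hi /coord_addv_neq0 [/coord_unitv_neq0 ->|/coord_comb_neq0 [->|Eib]] //.
  by move: Hi; rewrite Eib eqxx.
- apply: tx_S5_safe_decoded => i /coord_addv_neq0 [/coord_unitv_neq0 ->|/coord_comb_neq0 [->|->]];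
    [by left | by left | by right; apply: decoded_rcons].
Qed.

Lemma tx_good_case2_unitv k : decoded KN m -> decoded KD m -> (k <= m)%N ->
  tx_good s (Some (addv (unitv m) (unitv k))).
Proof.
move=> HNm HDm Hk; split.
- move=> i Hi; apply/eqP; apply: contraT.
  case/coord_addv_neq0 => /coord_unitv_neq0 Ei; move: Hi; rewrite Ei.
  + by rewrite ltnn.
  + by rewrite ltnNge Hk.
- left; exists k => i Hi /coord_addv_neq0 [/coord_unitv_neq0 ->|/coord_unitv_neq0 Eik] //.
  by move: Hi; rewrite Eik eqxx.
- apply: tx_S5_safe_decoded => i /coord_addv_neq0 [/coord_unitv_neq0 ->|/coord_unitv_neq0 ->];
    first by left.
  by right; apply: (decoded_rcons_pair HDm) => j; rewrite coord_addv !coord_unitv.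
Qed.

Lemma tx_good_case2 y : S1 s m -> case1 n s y ->
  tx_good s (Some (if y is Some v then addv (unitv m) v else unitv m)).
Proof.
case=> HNm HDm /case1_shape [->|[a [b [-> Ha Hb]]]|[k -> Hk]].
- exact: tx_good_unitv.
- exact: tx_good_case2_comb.
- exact: tx_good_case2_unitv.
Qed.

Lemma tx_good_case34 c k : decoded KN m -> first_oldest [:: S4 s; S5 s; S6 n s] k ->
  tx_good s (Some (comb m c k)).
Proof.
move=> Hm Hk; split; [|by left; apply: tx_N_safe_comb|].
  apply: tx_supported_comb => //.
  by case/first_oldest3: Hk => [[/decoded_D_le]|[_ [[/heard_D_le]]]|[_ _ /S6_le]].
case/first_oldest3: Hk => [[HDk _]|[_ Hk]|[_ HS5 _]].
  apply: tx_S5_safe_decoded => i /coord_comb_neq0 [->|->]; first by left.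
  by right; apply: decoded_rcons.
all: exists k; [by [left | right] |].
all: by move=> i Hik /coord_comb_neq0 [->|Eik]; [left | move: Hik; rewrite Eik eqxx].
Qed.

Lemma tx_good_case5 k : S4 s m -> first_oldest [:: S2 s; S3 s; S6 n s] k ->
  tx_good s (Some (comb m 1 k)).
Proof.
move=> [HDm _] Hk.
have HS5 : decoded KN k \/ decoded (rcons KD (comb m 1 k)) k -> tx_S5_safe s (Some (comb m 1 k)).
  move=> Hdk; apply: tx_S5_safe_decoded => i /coord_comb_neq0 [->|->] //.
  by right; apply: decoded_rcons.
have HN_safe : decoded KN k -> tx_N_safe s (Some (comb m 1 k)).
  by move=> HNk; exists m => i Him /coord_comb_neq0 [Eim|->] //; move: Him; rewrite Eim eqxx.
case/first_oldest3: Hk => [[HNk _]|[_ [HNk _]]|[HS2 _ HS6]].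
1,2: by split; [exact: tx_supported_comb (leqnn m) (decoded_N_le HNk)
               | left; apply: HN_safe | apply: HS5; left].
split; [exact: tx_supported_comb (leqnn m) (S6_le HS6) | by right; exists k |].
apply: HS5; right; apply: (decoded_rcons_pair HDm) => j.
by rewrite coord_comb mul1r.
Qed.

Lemma tx_good_transmit x : transmit n s x -> tx_good s x.
Proof.
case=> [[_ /tx_good_case1 //]|[[_ [HS1 [y [Hy ->]]]]|[[_ [[HNm _] H]]|[[_ [[HNm _] H]]|
       [[_ [HS4 H]]|[_ [_ [_ [_ [_ ->]]]]]]]]]]; last exact: tx_good_unitv.
- exact: tx_good_case2.
- case: H => [[k [c [Hk [_ [_ [_ ->]]]]]]|[_ ->]]; [exact: tx_good_case34 | exact: tx_good_unitv].
- case: H => [[k [Hk ->]]|[_ ->]]; [exact: tx_good_case34 | exact: tx_good_unitv].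
- case: H => [[k [Hk ->]]|[_ ->]]; [exact: tx_good_case5 | exact: tx_good_unitv].
Qed.

End Transmit.

Lemma invariant_all (a : nat -> nat) (e : nat -> 'I_3 -> bool) (st : nat -> state) :
  is_init (st 0%N) -> (forall t, step (a t) (e t) (st t) (st t.+1)) ->
  forall t, invariant (st t).
Proof.
move=> H0 Hstep; elim=> [|t IH]; first exact: invariant_init.
have [x [Hx [Hknow [Hmm Hrel]]]] := Hstep t.
exact: step_invariant IH (tx_good_transmit IH Hx) Hknow Hmm Hrel.
Qed.

Theorem theorem12 (a : nat -> nat) (e : nat -> 'I_3 -> bool) (st : nat -> state) :
  {homo a : t1 t2 / (t1 <= t2)%N} ->
  is_init (st 0%N) ->
  (forall t, step (a t) (e t) (st t) (st t.+1)) ->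
  forall t, (0 < t)%N ->
    ~ unsolved_nonempty (know (st t) (lN (st t))) \/
    ~ unsolved_nonempty (know (st t) (lD (st t))).
Proof.
(* The invariant holds at every slot, including [t = 0], whatever the arrivals. *)
move=> _ H0 Hstep t _; left; apply/solvedE.
exact: inv_solved_N (invariant_all H0 Hstep t).
Qed.
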